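(* Let $L$ be an $n\times n$ nonsingular M-matrix with integer entries. Every equivalence class of $\mathbb{Z}^n$ under $\sim$ contains exactly one $z$-superstable configuration.
   Context: A Z-matrix is a square real matrix whose off-diagonal entries are all $\le 0$. A nonsingular M-matrix is a Z-matrix $L$ that is invertible with $L^{-1}$ having all entries nonnegative. Vector inequalities are entrywise. For $f,g\in\mathbb{Z}^n$, $f\sim g$ means $g-f=Lz$ for some $z\in\mathbb{Z}^n$. A vector $f\in\mathbb{Z}^n$ with $f\ge 0$ is $z$-superstable with respect to $L$ if for every $z\in\mathbb{Z}^n$ with $z\ge0$ and $z\ne0$ there exists $i$ with $f_i-(Lz)_i<0$. *)

From HB Require Import structures.
From mathcomp Require Import all_boot all_order all_algebra.
Set Implicit Arguments. Unset Strict Implicit. Unset Printing Implicit Defensive.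
Import Order.TTheory GRing.Theory Num.Theory.
Local Open Scope ring_scope.

Definition Zmatrix (n : nat) (L : 'M[int]_n) : Prop :=
  forall i j : 'I_n, i != j -> L i j <= 0.

Definition ratmx (n : nat) (L : 'M[int]_n) : 'M[rat]_n := map_mx (fun x => x%:~R) L.

(* Nonsingular M-matrix: Z-matrix, invertible (over Q, equivalently over R),
   with entrywise nonnegative inverse. *)
Definition nonsingM (n : nat) (L : 'M[int]_n) : Prop :=
  Zmatrix L /\ ratmx L \in unitmx /\
  forall i j : 'I_n, 0 <= invmx (ratmx L) i j.

Definition Lequiv (n : nat) (L : 'M[int]_n) (f g : 'cV[int]_n) : Prop :=
  exists z : 'cV[int]_n, g - f = L *m z.

Definition zsuperstable (n : nat) (L : 'M[int]_n) (f : 'cV[int]_n) : Prop :=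
  (forall i : 'I_n, 0 <= f i 0) /\
  forall z : 'cV[int]_n, (forall i : 'I_n, 0 <= z i 0) -> z != 0 ->
    exists i : 'I_n, f i 0 - (L *m z) i 0 < 0.

From HB Require Import structures.
From mathcomp Require Import all_boot all_order all_algebra.
From mathcomp Require Import zify lra.
From Stdlib Require Import Classical.
Set Implicit Arguments. Unset Strict Implicit. Unset Printing Implicit Defensive.
Import Order.TTheory GRing.Theory Num.Theory.
Local Open Scope ring_scope.

(* Uniqueness only needs L to be a Z-matrix: if two superstable
   configurations differ by L z, split z = z+ - z- into parts with disjoint
   supports; then h - L z+ = g - L z- is nonnegative (on the support of z+
   use g, elsewhere use h), so superstability of h forces z+ = 0 and that of
   g forces z- = 0.
   Existence: adding a large multiple of L (adj L 1) = det L * 1 makes any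
   configuration nonnegative.  Then repeatedly fire a legal z >= 0, z <> 0;
   the potential sum (L^-1 g) is nonnegative on nonnegative configurations
   (L^-1 >= 0) and drops by sum z >= 1 at each firing, so this stops at a
   superstable configuration. *)

Definition nonneg_cV (n : nat) (v : 'cV[int]_n) : Prop := forall i, 0 <= v i 0.

Lemma cV_entryB (R : zmodType) (n : nat) (u v : 'cV[R]_n) (i : 'I_n) :
  (u - v) i 0 = u i 0 - v i 0.
Proof. by rewrite !mxE. Qed.

Lemma Lequiv_sym (n : nat) (L : 'M[int]_n) (f g : 'cV[int]_n) :
  Lequiv L f g -> Lequiv L g f.
Proof. by case=> z E; exists (- z); rewrite mulmxN -E opprB. Qed.

Lemma Lequiv_trans (n : nat) (L : 'M[int]_n) (f g h : 'cV[int]_n) :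
  Lequiv L f g -> Lequiv L g h -> Lequiv L f h.
Proof.
case=> z Ez [w Ew]; exists (z + w).
by rewrite mulmxDr -Ez -Ew [RHS]addrC addrA subrK.
Qed.

Section Uniqueness.
Variables (n : nat) (L : 'M[int]_n).
Hypothesis LZ : Zmatrix L.

Lemma Zmatrix_mul_le0 (w : 'cV[int]_n) (i : 'I_n) :
  nonneg_cV w -> w i 0 = 0 -> (L *m w) i 0 <= 0.
Proof.
move=> w_ge0 wi0; rewrite mxE; apply: sumr_le0 => j _.
have [<-|ij] := eqVneq i j; first by rewrite wi0 mulr0.
exact: mulr_le0_ge0 (LZ ij) (w_ge0 j).
Qed.

Lemma zsuperstable_fire_eq0 (g h z : 'cV[int]_n) :
  zsuperstable L g -> zsuperstable L h -> h - g = L *m z -> z = 0.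
Proof.
move=> [g_ge0 g_stable] [h_ge0 h_stable] Ehg.
pose zp : 'cV[int]_n := \col_i Num.max (z i 0) 0.
pose zm : 'cV[int]_n := \col_i Num.max (- z i 0) 0.
have zp_ge0 : nonneg_cV zp by move=> i; rewrite mxE; lia.
have zm_ge0 : nonneg_cV zm by move=> i; rewrite mxE; lia.
have Ez : z = zp - zm by apply/matrixP => i j; rewrite (ord1 j) !mxE; lia.
have Efire : h - L *m zp = g - L *m zm.
  have -> : h = g + L *m z by rewrite -Ehg addrC subrK.
  by rewrite Ez mulmxBr addrA addrAC addrK.
have fire_ge0 i : 0 <= (h - L *m zp) i 0.
  have [zi_ge0|zi_lt0] := lerP 0 (z i 0).
  - rewrite Efire cV_entryB subr_ge0 (le_trans _ (g_ge0 i)) //.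
    by apply: Zmatrix_mul_le0; rewrite // mxE; lia.
  - rewrite cV_entryB subr_ge0 (le_trans _ (h_ge0 i)) //.
    by apply: Zmatrix_mul_le0; rewrite // mxE; lia.
have zp0 : zp = 0.
  apply/eqP/contraT => /(h_stable _ zp_ge0)[i].
  by rewrite -cV_entryB ltNge fire_ge0.
have zm0 : zm = 0.
  apply/eqP/contraT => /(g_stable _ zm_ge0)[i].
  by rewrite -cV_entryB -Efire ltNge fire_ge0.
by rewrite Ez zp0 zm0 subr0.
Qed.

Lemma zsuperstable_Lequiv_eq (g h : 'cV[int]_n) :
  Lequiv L g h -> zsuperstable L g -> zsuperstable L h -> g = h.
Proof.
move=> [z Ez] g_stable h_stable.
have z0 := zsuperstable_fire_eq0 g_stable h_stable Ez.
by apply/eqP; rewrite eq_sym -subr_eq0 Ez z0 mulmx0.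
Qed.

End Uniqueness.

Lemma ratmx_unit_det (n : nat) (L : 'M[int]_n) :
  ratmx L \in unitmx -> \det L != 0.
Proof. by rewrite unitmxE unitfE /ratmx det_map_mx intr_eq0. Qed.

Lemma Lequiv_nonneg (n : nat) (L : 'M[int]_n) (f : 'cV[int]_n) :
  \det L != 0 -> exists g, Lequiv L f g /\ nonneg_cV g.
Proof.
move=> detL0; pose k : int := \sum_i `|f i 0|.
have f_le_k i : `|f i 0| <= k.
  by rewrite /k (bigD1 i) //= ler_wpDr // sumr_ge0.
have det2_ge1 : 1 <= \det L * \det L by move: detL0; nia.
pose z : 'cV[int]_n := (k * \det L) *: (\adj L *m const_mx 1).
have Lz i : (L *m z) i 0 = k * (\det L * \det L).
  by rewrite -scalemxAr mulmxA mul_mx_adj mul_scalar_mx !mxE mulr1 mulrA.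
exists (f + L *m z); split; first by exists z; rewrite addrC addKr.
move=> i; rewrite mxE Lz; apply: (@le_trans _ _ (f i 0 + k)).
- by have := f_le_k i; lia.
- by rewrite lerD2l ler_peMr // sumr_ge0.
Qed.

Lemma sum_cV_ge1 (n : nat) (z : 'cV[int]_n) :
  nonneg_cV z -> z != 0 -> 1 <= \sum_i z i 0.
Proof.
move=> z_ge0 /matrix0Pn[i [j]]; rewrite [j]ord1 => zi0.
by rewrite (bigD1 i) //= ler_wpDr ?sumr_ge0 // -gtz0_ge1 lt_def zi0 z_ge0.
Qed.

Lemma not_zsuperstable_fire (n : nat) (L : 'M[int]_n) (g : 'cV[int]_n) :
  nonneg_cV g -> ~ zsuperstable L g ->
  exists z, [/\ nonneg_cV z, z != 0 & nonneg_cV (g - L *m z)].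
Proof.
move=> g_ge0 g_unstable.
have [z [z_ge0 z0 no_neg]] : exists z : 'cV[int]_n,
    [/\ nonneg_cV z, z != 0 & ~ exists i, g i 0 - (L *m z) i 0 < 0].
  apply: NNPP => none; apply: g_unstable; split=> // z z_ge0 z0.
  by apply: NNPP => no_neg; apply: none; exists z.
exists z; split=> // i; rewrite cV_entryB leNgt; apply/negP => neg.
by apply: no_neg; exists i.
Qed.

Section Existence.
Variables (n : nat) (L : 'M[int]_n).
Hypothesis LM : nonsingM L.

Definition potential (g : 'cV[int]_n) : rat :=
  \sum_i (invmx (ratmx L) *m map_mx intr g) i 0.

Lemma potential_ge0 (g : 'cV[int]_n) : nonneg_cV g -> 0 <= potential g.
Proof.
case: LM => _ [_ inv_ge0] g_ge0; apply: sumr_ge0 => i _; rewrite mxE.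
by apply: sumr_ge0 => j _; rewrite mxE mulr_ge0 // ler0z.
Qed.

Lemma potential_fire (g z : 'cV[int]_n) :
  potential (g - L *m z) = potential g - (\sum_i z i 0)%:~R.
Proof.
case: LM => _ [L_unit _].
rewrite /potential map_mxB map_mxM -/(ratmx L) mulmxBr mulmxA mulVmx //.
by rewrite mul1mx rmorph_sum -sumrB; apply: eq_bigr => i _; rewrite !mxE.
Qed.

Lemma zsuperstable_of_potential_lt (f : 'cV[int]_n) (N : nat) (g : 'cV[int]_n) :
  Lequiv L f g -> nonneg_cV g -> potential g < N%:R ->
  exists g', Lequiv L f g' /\ zsuperstable L g'.
Proof.
elim: N g => [|N IH] g fg g_ge0 potN.
  by have := potential_ge0 g_ge0; rewrite leNgt potN.
have [g_stable|g_unstable] := classic (zsuperstable L g); first by exists g.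
have [z [z_ge0 z0 fire_ge0]] := not_zsuperstable_fire g_ge0 g_unstable.
apply: (IH (g - L *m z)) => //.
  by apply: Lequiv_trans fg _; exists (- z); rewrite mulmxN addrC addKr.
rewrite potential_fire; have := sum_cV_ge1 z_ge0 z0; rewrite -(ler_int rat).
by move: potN; rewrite -natr1; lra.
Qed.

Lemma exists_zsuperstable (f : 'cV[int]_n) :
  exists g, Lequiv L f g /\ zsuperstable L g.
Proof.
have [_ [L_unit _]] := LM.
have [g [fg g_ge0]] := Lequiv_nonneg f (ratmx_unit_det L_unit).
exact: zsuperstable_of_potential_lt fg g_ge0 (archi_boundP (potential_ge0 g_ge0)).
Qed.

End Existence.

Theorem mainTheorem6 (n : nat) (L : 'M[int]_n) (HL : nonsingM L) :
  forall f : 'cV[int]_n,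
    exists! g : 'cV[int]_n, Lequiv L f g /\ zsuperstable L g.
Proof.
move=> f; have [g [fg g_stable]] := exists_zsuperstable HL f.
exists g; split=> // h [fh h_stable].
have [LZ _] := HL.
exact: (zsuperstable_Lequiv_eq LZ (Lequiv_trans (Lequiv_sym fg) fh) g_stable h_stable).
Qed.
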